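(* Let $F$ be a field of characteristic $0$, $d\ge1$, and let $\lambda,\mu$ be partitions with $\lambda\subset\mu$. (1) If $ST(\lambda)$ is a tensor polynomial identity for $M_d(F)$, then $ST(\mu)$ is a tensor polynomial identity for $M_d(F)$. (2) If $ST(\mu)$ is not a tensor polynomial identity for $M_d(F)$, then $ST(\lambda)$ is not a tensor polynomial identity for $M_d(F)$.
   Context: For partitions $\lambda,\mu$, $\lambda\subset\mu$ means $\lambda_i\le\mu_i$ for all $i$ (parts beyond the length taken as $0$), i.e. the Young diagram of $\lambda$ fits in that of $\mu$. For $\lambda=(h_1,\dots,h_n)\vdash k$, $ST(\lambda)(x_1,\dots,x_k):=\sum_{\tau\in S_k}\epsilon_\tau(X_1\otimes\cdots\otimes X_n)(x_{\tau(1)},\dots,x_{\tau(k)})\in F\langle X\rangle^{\otimes n}$ with $X_j:=x_{h_1+\dots+h_{j-1}+1}\cdots x_{h_1+\dots+h_j}$, $F\langle X\rangle$ the free associative algebra. A tensor polynomial identity (TPI) for $M_d(F)$ is a tensor polynomial vanishing under every evaluation $x_i\mapsto A_i\in M_d(F)$. *)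

From HB Require Import structures.
From mathcomp Require Import all_boot all_order all_algebra all_fingroup.
Set Implicit Arguments. Unset Strict Implicit. Unset Printing Implicit Defensive.
Import Order.TTheory GRing.Theory.
Local Open Scope ring_scope.

Definition is_partition (l : seq nat) : bool :=
  sorted geq l && all (fun x => 0 < x)%N l.

Definition part_sub (l m : seq nat) : Prop :=
  forall i : nat, (nth 0 l i <= nth 0 m i)%N.

Definition perm_nat (k : nat) (t : 'S_k) (i : nat) : nat :=
  if insub i is Some o then val (t o) else i.

(* Evaluation of the j-th tensor factor X_j(x_{t(1)},...,x_{t(k)}) at x_i := A i
   (0-indexed): the ordered product of A (t i) for i in the j-th block
   [h_1+...+h_{j}, h_1+...+h_{j+1}). *)
Definition block_eval (F : fieldType) (d : nat) (l : seq nat)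
    (A : nat -> 'M[F]_d) (t : 'S_(sumn l)) (j : nat) : 'M[F]_d :=
  let s := sumn (take j l) in
  \big[mulmx/1%:M]_(s <= i < s + nth 0 l j) A (perm_nat t i).

(* Coefficient of the basis tensor E_{c 0} (x) ... (x) E_{c (n-1)} of
   M_d(F)^{(x) n} in the evaluation of ST(l) at x_i := A i. *)
Definition ST_coeff (F : fieldType) (d : nat) (l : seq nat)
    (A : nat -> 'M[F]_d) (c : 'I_(size l) -> 'I_d * 'I_d) : F :=
  \sum_(t : 'S_(sumn l))
     (-1) ^+ (odd_perm t) *
     \prod_(j < size l) block_eval A t j (c j).1 (c j).2.

(* ST(l) is a tensor polynomial identity for M_d(F): every evaluation is the
   zero tensor, i.e. all its coordinates in the standard basis vanish. *)
Definition ST_is_TPI (F : fieldType) (d : nat) (l : seq nat) : Prop :=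
  forall (A : nat -> 'M[F]_d) (c : 'I_(size l) -> 'I_d * 'I_d),
    ST_coeff A c = 0.

From HB Require Import structures.
From mathcomp Require Import all_boot all_order all_algebra all_fingroup.
Set Implicit Arguments. Unset Strict Implicit. Unset Printing Implicit Defensive.
Import GRing.Theory.

(* Adding one box at the end of the j-th block of ST(l) is a Laplace-type
   expansion.  Split the permutations of k+1 letters according to the letter q
   sent to the new slot: x_q becomes a right factor of X_j, and the (a, b)
   coordinate of X_j A_q is sum_r (X_j)_(a,r) (A_q)_(r,b).  So every evaluation
   of the enlarged polynomial is a linear combination of evaluations of ST(l) on
   the remaining variables, and vanishes when ST(l) is an identity.  A part 0
   contributes the scalar factor 1_(a,b), so padding l with zeros to the length
   of m and adding boxes one at a time reaches m. *)

Lemma sumn_incr_nth (l : seq nat) j : sumn (incr_nth l j) = (sumn l).+1.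
Proof.
elim: l j => [|x l IH] [|j] //=; rewrite ?IH ?addnS //.
by rewrite sumn_ncons.
Qed.

Lemma sumn_takeS (l : seq nat) j : sumn (take j.+1 l) = (sumn (take j l) + nth 0 l j)%N.
Proof. by elim: l j => [|x l IH] [|j] //=; rewrite ?take0 ?IH ?addn0 ?addnA. Qed.

Lemma sumn_take_leq (l : seq nat) j : (sumn (take j l) <= sumn l)%N.
Proof. by rewrite -{2}(cat_take_drop j l) sumn_cat leq_addr. Qed.

Lemma leq_sumn_take (l : seq nat) j j' : (j <= j')%N ->
  (sumn (take j l) <= sumn (take j' l))%N.
Proof.
by move=> le_jj'; rewrite -(take_takel l le_jj') sumn_take_leq.
Qed.

Lemma sumn_take_incr_nth (l : seq nat) j j' : (j < size l)%N ->
  sumn (take j' (incr_nth l j)) = (sumn (take j' l) + (j < j'))%N.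
Proof.
elim: l j j' => [|x l IH] [|j] [|j'] //= lt_j; rewrite ?IH ?addnA ?addn0 ?addn1 //.
Qed.

Lemma size_le_part_sub l m : all (fun x => 0 < x)%N l -> part_sub l m ->
  (size l <= size m)%N.
Proof.
move=> /allP l_pos sub_lm; rewrite leqNgt; apply/negP => lt_ml.
have := sub_lm (size m); rewrite [nth _ m _]nth_default // leqn0 => /eqP l_m0.
by have := l_pos _ (mem_nth 0%N lt_ml); rewrite l_m0.
Qed.

Section LiftPerm.
Variables (n : nat) (p : 'I_n.+1).

Definition unlift_perm_fun (s : 'S_n.+1) (k : 'I_n) : 'I_n :=
  odflt k (unlift (s p) (s (lift p k))).

Lemma lift_unlift_perm_fun (s : 'S_n.+1) k :
  lift (s p) (unlift_perm_fun s k) = s (lift p k).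
Proof.
rewrite /unlift_perm_fun; have := neq_lift p k; rewrite -(inj_eq (@perm_inj _ s)).
by case/unlift_some=> k' -> ->.
Qed.

Lemma unlift_perm_fun_inj (s : 'S_n.+1) : injective (unlift_perm_fun s).
Proof.
move=> k1 k2 /(congr1 (lift (s p))); rewrite !lift_unlift_perm_fun.
by move/perm_inj; apply: lift_inj.
Qed.

Definition unlift_perm (s : 'S_n.+1) : 'S_n := perm (@unlift_perm_fun_inj s).

Lemma unlift_lift_perm q : cancel (lift_perm p q) unlift_perm.
Proof.
move=> t; apply/permP => k; apply: (@lift_inj _ q).
by rewrite permE -{1}(lift_perm_id p q t) lift_unlift_perm_fun lift_perm_lift.
Qed.

Lemma lift_unlift_perm (s : 'S_n.+1) : lift_perm p (s p) (unlift_perm s) = s.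
Proof.
apply/permP => k; case: (unliftP p k) => [k'|] ->; rewrite ?lift_perm_id //.
by rewrite lift_perm_lift permE lift_unlift_perm_fun.
Qed.

Lemma big_perm_lift (R : Type) (idx : R) (op : Monoid.com_law idx) (f : 'S_n.+1 -> R) :
  \big[op/idx]_(s : 'S_n.+1) f s =
  \big[op/idx]_(q : 'I_n.+1) \big[op/idx]_(t : 'S_n) f (lift_perm p q t).
Proof.
rewrite (partition_big (fun s : 'S_n.+1 => s p) predT) //=.
apply: eq_bigr => q _; rewrite (reindex (lift_perm p q)) /=.
  by apply: eq_bigl => t; rewrite lift_perm_id eqxx.
exists unlift_perm => [t _ | s /eqP <-].
  exact: unlift_lift_perm.
exact: lift_unlift_perm.
Qed.
End LiftPerm.

Lemma perm_nat_lift k (p q : 'I_k.+1) (t : 'S_k) i : (i < k)%N ->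
  perm_nat (lift_perm p q t) (bump p i) = bump q (perm_nat t i).
Proof.
move=> lt_ik; rewrite /perm_nat (_ : bump p i = lift p (Ordinal lt_ik)) //.
by rewrite valK lift_perm_lift insubT.
Qed.

Lemma perm_nat_lift_id k (p q : 'I_k.+1) (t : 'S_k) : perm_nat (lift_perm p q t) p = q.
Proof. by rewrite /perm_nat valK lift_perm_id. Qed.

Local Open Scope ring_scope.

Section Evaluation.
Variables (F : fieldType) (d : nat).

HB.instance Definition _ := Monoid.isLaw.Build 'M[F]_d 1%:M (@mulmx F d d d)
  (@mulmxA F d d d d) (@mul1mx F d d) (@mulmx1 F d d).

(* [blockprod] and [st_eval] generalise [block_eval] and [ST_coeff] to
   permutations of an arbitrary 'I_k and to nat-indexed coordinates, so that
   lists with different sizes and sums can be compared. *)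
Definition blockprod k (l : seq nat) (A : nat -> 'M[F]_d) (t : 'S_k) j : 'M[F]_d :=
  let s := sumn (take j l) in
  \big[mulmx/1%:M]_(s <= i < s + nth 0%N l j) A (perm_nat t i).

Lemma blockprod_incr_nth l j A (p q : 'I_(sumn l).+1) (t : 'S_(sumn l)) j' :
  (j < size l)%N -> p = sumn (take j.+1 l) :> nat ->
  blockprod (incr_nth l j) A (lift_perm p q t) j' =
  blockprod l (A \o bump q) t j' *m (if j' == j then A q else 1%:M).
Proof.
move=> lt_j p_end; rewrite /blockprod sumn_take_incr_nth // nth_incr_nth.
have lt_sumn j'' i : (i < sumn (take j'' l) + nth 0 l j'')%N -> (i < sumn l)%N.
  by move/leq_trans; apply; rewrite -sumn_takeS sumn_take_leq.
case: (ltngtP j' j) => [lt_j'j | lt_jj' | ->].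
- rewrite /= !addn0 add0n mulmx1; apply: eq_big_nat => i /andP[_ lt_i].
  have lt_ip : (i < p)%N.
    by rewrite p_end (leq_trans lt_i) // -sumn_takeS leq_sumn_take // ltnS ltnW.
  by rewrite /= -(perm_nat_lift p q t (lt_sumn _ _ lt_i)) /bump leqNgt lt_ip.
- rewrite /= add0n addn1 mulmx1 big_add1 addSn /=.
  apply: eq_big_nat => i /andP[le_i lt_i].
  have le_pi : (p <= i)%N by rewrite p_end (leq_trans _ le_i) ?leq_sumn_take.
  by rewrite -(perm_nat_lift p q t (lt_sumn _ _ lt_i)) /bump le_pi.
- rewrite /= !addn0 add1n addnS big_nat_recr ?leq_addr //= -sumn_takeS -p_end.
  rewrite perm_nat_lift_id; congr (_ *m _); apply: eq_big_nat => i /andP[_ lt_i].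
  have lt_ik : (i < sumn l)%N := leq_trans lt_i (ltn_ord p).
  by rewrite -(perm_nat_lift p q t lt_ik) /bump leqNgt lt_i.
Qed.

Lemma prod_mulmx_entry_at n j (M : nat -> 'M[F]_d) (B : 'M[F]_d)
    (c : nat -> 'I_d * 'I_d) : (j < n)%N ->
  \prod_(0 <= i < n) (M i *m (if i == j then B else 1%:M)) (c i).1 (c i).2 =
  \sum_(r < d) B r (c j).2 *
    \prod_(0 <= i < n) M i ([eta c with j |-> ((c j).1, r)] i).1
                           ([eta c with j |-> ((c j).1, r)] i).2.
Proof.
move=> lt_jn; have j_in : j \in index_iota 0 n by rewrite mem_index_iota.
rewrite (bigD1_seq j) ?iota_uniq //= eqxx mxE big_distrl /=.
apply: eq_bigr => r _; rewrite (bigD1_seq j) ?iota_uniq //= eqxx /=.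
rewrite mulrCA mulrA; congr (_ * _); apply: eq_bigr => i /negbTE ne_ij.
by rewrite ne_ij mulmx1.
Qed.

Definition st_eval k (l : seq nat) (A : nat -> 'M[F]_d) (c : nat -> 'I_d * 'I_d) : F :=
  \sum_(t : 'S_k) (-1) ^+ odd_perm t *
     \prod_(0 <= j < size l) blockprod l A t j (c j).1 (c j).2.

Lemma st_eval_incr_nth l j A c : (j < size l)%N ->
  st_eval (sumn l).+1 (incr_nth l j) A c =
  \sum_(q < (sumn l).+1) (-1) ^+ (odd (sumn (take j.+1 l)) (+) odd q) *
    \sum_(r < d) A q r (c j).2 *
      st_eval (sumn l) l (A \o bump q) [eta c with j |-> ((c j).1, r)].
Proof.
move=> lt_j; rewrite /st_eval size_incr_nth lt_j.
have lt_end : (sumn (take j.+1 l) < (sumn l).+1)%N by rewrite ltnS sumn_take_leq.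
pose p := Ordinal lt_end; have p_end : p = sumn (take j.+1 l) :> nat by [].
rewrite (big_perm_lift p); apply: eq_bigr => q _.
under eq_bigr => t _.
  under eq_big_nat => j' _ do rewrite (blockprod_incr_nth A q t j' lt_j p_end).
  rewrite prod_mulmx_entry_at // odd_lift_perm signr_addb -mulrA mulr_sumr.
  over.
rewrite -mulr_sumr exchange_big; congr (_ * _); apply: eq_bigr => r _ /=.
by rewrite mulr_sumr; apply: eq_bigr => t _; rewrite mulrCA.
Qed.

Definition st_vanishes (l : seq nat) : Prop :=
  forall A c, st_eval (sumn l) l A c = 0.

Lemma ST_is_TPIE l : (0 < d)%N -> ST_is_TPI F d l <-> st_vanishes l.
Proof.
move=> d_gt0; split=> [TPI_l A c | van_l A c].
  rewrite -(TPI_l A (fun j => c (val j))); apply: eq_bigr => t _.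
  by rewrite big_mkord.
pose c' j := if insub j is Some o then c o else (Ordinal d_gt0, Ordinal d_gt0).
rewrite -(van_l A c'); apply: eq_bigr => t _; rewrite big_mkord.
by congr (_ * _); apply: eq_bigr => j _; rewrite /c' valK.
Qed.

Lemma st_vanishes_incr_nth l j : (j < size l)%N ->
  st_vanishes l -> st_vanishes (incr_nth l j).
Proof.
move=> lt_j van_l A c; rewrite sumn_incr_nth st_eval_incr_nth //.
by apply: big1 => q _; rewrite big1 ?mulr0 // => r _; rewrite van_l mulr0.
Qed.

Lemma st_eval_rcons0 k l A c :
  st_eval k (rcons l 0%N) A c = ((c (size l)).1 == (c (size l)).2)%:R * st_eval k l A c.
Proof.
rewrite /st_eval mulr_sumr; apply: eq_bigr => t _.
rewrite size_rcons big_nat_recr //= [RHS]mulrCA [X in _ * X = _]mulrC.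
congr (_ * (_ * _)).
  by rewrite /blockprod nth_rcons ltnn eqxx addn0 big_geq // mxE.
apply: eq_big_nat => j /andP[_ lt_j].
by rewrite /blockprod -cats1 takel_cat ?nth_cat ?lt_j // ltnW.
Qed.

Lemma st_vanishes_pad0 l n : st_vanishes l -> st_vanishes (l ++ nseq n 0%N).
Proof.
move=> van_l; elim: n => [|n IHn]; first by rewrite cats0.
move=> A c; rewrite -addn1 nseqD catA cats1 sumn_rcons addn0 st_eval_rcons0.
by rewrite IHn mulr0.
Qed.

Lemma st_vanishes_le l m : size l = size m -> part_sub l m ->
  st_vanishes l -> st_vanishes m.
Proof.
move gap: (\sum_(i < size m) (nth 0 m i - nth 0 l i))%N => n.
elim: n l gap => [|n IHn] l gap size_lm le_lm van_l.
  suff <- : l = m by [].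
  apply: (@eq_from_nth _ 0%N) => // i; rewrite size_lm => lt_im.
  apply/eqP; rewrite eqn_leq le_lm -subn_eq0.
  by move/eqP: gap; rewrite sum_nat_eq0 => /forallP /(_ (Ordinal lt_im)).
case: (pickP (fun i : 'I_(size m) => nth 0 l i < nth 0 m i)%N) => [i lt_lmi | no_gap];
  last first.
  suff : (\sum_(i < size m) (nth 0 m i - nth 0 l i))%N = 0 by rewrite gap.
  by apply: big1 => i _; apply/eqP; rewrite subn_eq0 leqNgt no_gap.
apply: (IHn (incr_nth l i)); last by apply: st_vanishes_incr_nth; rewrite // size_lm.
- apply: succn_inj; rewrite -gap (bigD1 i) // [in RHS](bigD1 i) //= nth_incr_nth eqxx.
  rewrite add1n subnS -addSn prednK ?subn_gt0 //; congr (_ + _)%N.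
  apply: eq_bigr => k ne_ki.
  by rewrite nth_incr_nth eq_sym (negbTE (ne_ki : val k != val i)).
- by rewrite size_incr_nth size_lm ltn_ord.
- by move=> k; rewrite nth_incr_nth; case: eqP => [<-|_]; rewrite ?le_lm.
Qed.

End Evaluation.

Theorem mainTheorem10 (F : fieldType) (d : nat) (l m : seq nat) :
  [pchar F]%R =i pred0 -> (0 < d)%N ->
  is_partition l -> is_partition m -> part_sub l m ->
  (ST_is_TPI F d l -> ST_is_TPI F d m) /\
  (~ ST_is_TPI F d m -> ~ ST_is_TPI F d l).
Proof.
move=> _ d_gt0 /andP[_ l_pos] _ sub_lm.
have TPI_lm : ST_is_TPI F d l -> ST_is_TPI F d m.
  move=> /(ST_is_TPIE F l d_gt0) /(st_vanishes_pad0 (size m - size l)) van_l.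
  apply/(ST_is_TPIE F m d_gt0); apply: st_vanishes_le van_l => [|i].
    by rewrite size_cat size_nseq subnKC ?size_le_part_sub.
  rewrite nth_cat; case: ltnP => _; first exact: sub_lm.
  by rewrite nth_nseq if_same.
by split=> // not_TPI_m /TPI_lm /not_TPI_m.
Qed.
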